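(* Let $G$ be a very well-covered graph with $V(G)=\{x_1,\ldots,x_h,y_1,\ldots,y_h\}$ such that $\{x_1,\ldots,x_h\}$ is a minimal vertex cover, $\{y_1,\ldots,y_h\}$ a maximal independent set and $\{x_i,y_i\}\in E(G)$ for all $i$. Let $s\ge1$, $e_1,\ldots,e_s\in E(G)$, and let $G'$ be the graph associated to $(I(G)^{s+1}:e_1\cdots e_s)$ as in the context. Let $y\in V(G)$ and $H=G\setminus N_G[y]$. If $\{e_1,\ldots,e_s\}\cap E(H)=\{e_{i_1},\ldots,e_{i_t}\}$ and $H'$ is the graph associated (in the same way) to $(I(H)^{t+1}:e_{i_1}\cdots e_{i_t})$, then $G'\setminus N_{G'}[y]$ is an induced subgraph of $H'$. In particular $\operatorname{reg}(I(G'\setminus N_{G'}[y]))\le\operatorname{reg}(I(H'))$.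
   Context: $N_G[y]$ is the closed neighbourhood of $y$; for $U\subseteq V(G)$, $G\setminus U$ is the induced subgraph on $V(G)\setminus U$. $I(\cdot)$ is the edge ideal; edges are identified with the products of their endpoints; $\operatorname{reg}$ is Castelnuovo–Mumford regularity. $G$ is very well-covered if it has no isolated vertices, all minimal vertex covers have the same size, and this size is $|V(G)|/2$. Even-connection: a sequence $p_0p_1\cdots p_{2k+1}$, $k\ge1$, with $\{p_r,p_{r+1}\}\in E(G)$ for all $r$, each $\{p_{2\ell+1},p_{2\ell+2}\}$ ($0\le\ell\le k-1$) equal to some $e_m$, each edge used among these at most as many times as it appears in $e_1,\dots,e_s$; then $p_0,p_{2k+1}$ (possibly equal) are even-connected. $(I(G)^{s+1}:e_1\cdots e_s)$ is minimally generated by $uv$ with $\{u,v\}\in E(G)$ or $u,v$ even-connected; the graph associated to it is the graph whose edge ideal is the polarization of this ideal (each generator $u^2$ replaced by $uu^*$ with a new vertex $u^*$). *)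

From mathcomp Require Import all_boot.
Set Implicit Arguments. Unset Strict Implicit. Unset Printing Implicit Defensive.

(* Simple graphs: a symmetric irreflexive boolean relation on a finType T;
   the vertex set of such a graph G is all of T. *)
Definition simple_graph (T : finType) (E : rel T) := symmetric E /\ irreflexive E.

Definition vertex_cover (T : finType) (E : rel T) (C : {set T}) :=
  forall u v, E u v -> (u \in C) || (v \in C).

Definition min_vertex_cover (T : finType) (E : rel T) (C : {set T}) :=
  vertex_cover E C /\ forall D : {set T}, D \proper C -> ~ vertex_cover E D.

Definition independent (T : finType) (E : rel T) (S : {set T}) :=
  forall u v, u \in S -> v \in S -> ~~ E u v.

Definition max_independent (T : finType) (E : rel T) (S : {set T}) :=
  independent E S /\ forall S' : {set T}, S \proper S' -> ~ independent E S'.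

Definition very_well_covered (T : finType) (E : rel T) :=
  (forall u, exists v, E u v) /\
  forall C : {set T}, min_vertex_cover E C -> (#|C| * 2 = #|T|)%N.

Definition cnbhd (T : finType) (E : rel T) (y : T) : pred T :=
  fun u => (u == y) || E y u.

Definition del_cnbhd (T : finType) (E : rel T) (y : T) : rel T :=
  fun a b => [&& E a b, ~~ cnbhd E y a & ~~ cnbhd E y b].

Definition sameEdge (T : eqType) (p q : T * T) : bool :=
  ((p.1 == q.1) && (p.2 == q.2)) || ((p.1 == q.2) && (p.2 == q.1)).

(* u, v even-connected in E with respect to the (multi)list of edges es:
   a walk p_0 p_1 ... p_{2k+1} (k >= 1) with p_0 = u, p_{2k+1} = v,
   consecutive vertices adjacent, every {p_{2l+1}, p_{2l+2}} (l < k) one of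
   the edges in es, each edge used at most as often as it occurs in es. *)
Definition even_connected (T : finType) (E : rel T) (es : seq (T * T)) (u v : T) : Prop :=
  exists (p : seq T) (k : nat),
    [/\ (1 <= k)%N, size p = (2 * k + 2)%N,
        nth u p 0 = u, nth u p (2 * k + 1) = v &
        [/\ forall r, (r < 2 * k + 1)%N -> E (nth u p r) (nth u p r.+1),
            forall l, (l < k)%N ->
              has (sameEdge (nth u p (2 * l + 1), nth u p (2 * l + 2))) es &
            forall f : T * T,
              (count (sameEdge f)
                 [seq (nth u p (2 * l + 1), nth u p (2 * l + 2)) | l <- iota 0 k]
               <= count (sameEdge f) es)%N]].

(* The graph associated to (I(E)^{s+1} : e_1 ... e_s) (es = [:: e_1; ...; e_s]):
   the graph of the polarization.  Vertices are T + T: inl u is the original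
   vertex u, inr u is the new polarization vertex u^* (relevant only when u^2
   is a generator, i.e. u is even-connected to itself). *)
Definition assoc_graph (T : finType) (E : rel T) (es : seq (T * T)) :
    T + T -> T + T -> Prop :=
  fun a b => match a, b with
  | inl u, inl v => u <> v /\ (E u v \/ even_connected E es u v)
  | inl u, inr v => u = v /\ even_connected E es u u
  | inr u, inl v => u = v /\ even_connected E es u u
  | inr _, inr _ => False
  end.

Definition del_cnbhdP (X : Type) (R : X -> X -> Prop) (y : X) : X -> X -> Prop :=
  fun a b => R a b /\ (a <> y /\ ~ R y a) /\ (b <> y /\ ~ R y b).

(* K is an induced subgraph of L, graphs being identified with their edge
   sets (edge ideals), i.e. vertex set = non-isolated vertices:
   every edge of K is an edge of L, and any edge of L between two
   vertices of K is an edge of K. *)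
Definition induced_sub (X : Type) (K L : X -> X -> Prop) :=
  (forall a b, K a b -> L a b) /\
  (forall a b, (exists c, K a c) -> (exists c, K b c) -> L a b -> K a b).

From mathcomp Require Import all_boot zify.

Set Implicit Arguments.
Unset Strict Implicit.
Unset Printing Implicit Defensive.

(* Write an even-connection of u and v as a walk u a1 b1 ... ak bk v (k >= 1)
   whose pairs {ai, bi} form a sub-multiset of the listed edges.  Suppose u and
   v lie outside N_{G'}[y].  If y were adjacent to some ai, the tail y ai bi ...
   v would even-connect y and v; if y were adjacent to some bi, the reversed
   head y bi ai ... u would even-connect y and u; if y were some ai (resp. bi),
   the head (resp. tail) of the walk would join y to u (resp. v) in G'.  So
   the whole walk lives in H = G \ N_G[y], and its pairs are edges of H, i.e.
   it is an even-connection of H' (and conversely every one of H' is one of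
   G'). *)

Section EvenWalks.
Variable T : finType.
Implicit Types (E R : rel T) (Q : pred T) (ps es : seq (T * T)).
Implicit Types (e f : T * T) (u v y : T).

Definition flip_edge e : T * T := (e.2, e.1).

Lemma sameEdge_refl e : sameEdge e e.
Proof. by rewrite /sameEdge !eqxx. Qed.

Lemma sameEdge_flip f e : sameEdge f (flip_edge e) = sameEdge f e.
Proof. by rewrite /sameEdge /= orbC. Qed.

Lemma sameEdge_rel R e f : symmetric R -> sameEdge e f -> R e.1 e.2 = R f.1 f.2.
Proof. by move=> sR /orP[|] /andP[/eqP-> /eqP->]. Qed.

Definition edge_submset ps es :=
  forall f, (count (sameEdge f) ps <= count (sameEdge f) es)%N.

Lemma edge_submset_has ps es e :
  edge_submset ps es -> e \in ps -> has (sameEdge e) es.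
Proof.
move=> S e_ps; rewrite has_count (leq_trans _ (S e)) // -has_count.
by apply/hasP; exists e; rewrite ?sameEdge_refl.
Qed.

Lemma edge_submset_catl ps1 ps2 es :
  edge_submset (ps1 ++ ps2) es -> edge_submset ps1 es.
Proof. by move=> S f; apply: leq_trans (S f); rewrite count_cat leq_addr. Qed.

Lemma edge_submset_catr ps1 ps2 es :
  edge_submset (ps1 ++ ps2) es -> edge_submset ps2 es.
Proof. by move=> S f; apply: leq_trans (S f); rewrite count_cat leq_addl. Qed.

Lemma edge_submset_rev_flip ps es :
  edge_submset ps es -> edge_submset (rev (map flip_edge ps)) es.
Proof.
by move=> S f; rewrite count_rev count_map (eq_count (sameEdge_flip f)).
Qed.

Lemma edge_submset_filter R ps es : symmetric R ->
  edge_submset ps es -> {in ps, forall e, R e.1 e.2} ->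
  edge_submset ps [seq e <- es | R e.1 e.2].
Proof.
move=> sR S R_ps f; have [/hasP[e e_ps fe]|] := boolP (has (sameEdge f) ps).
  rewrite count_filter (@eq_in_count _ (predI _ _) (sameEdge f)) ?S //.
  move=> e' _ /=.
  have [fe'|//] := boolP (sameEdge f e').
  by rewrite -(sameEdge_rel sR fe') (sameEdge_rel sR fe) R_ps.
by rewrite has_count -leqNgt leqn0 => /eqP->.
Qed.

Fixpoint even_walk E ps u v : bool :=
  if ps is e :: ps' then [&& E u e.1, E e.1 e.2 & even_walk E ps' e.2 v]
  else E u v.

Lemma even_walk_cat E ps1 e ps2 u v :
  even_walk E (ps1 ++ e :: ps2) u v =
  [&& even_walk E ps1 u e.1, E e.1 e.2 & even_walk E ps2 e.2 v].
Proof. by elim: ps1 u => [|e' ps1 IH] u //=; rewrite IH !andbA. Qed.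

Lemma even_walk_rev E ps u v : symmetric E ->
  even_walk E ps u v -> even_walk E (rev (map flip_edge ps)) v u.
Proof.
move=> sE; elim: ps u => [|e ps IH] u /=; first by rewrite sE.
case/and3P=> ue ee ev; rewrite rev_cons -cats1.
by rewrite (even_walk_cat E (rev _) (flip_edge e) [::]) /= IH // sE ee sE ue.
Qed.

Lemma even_walk_edge E ps u v e : even_walk E ps u v -> e \in ps -> E e.1 e.2.
Proof.
move=> W /splitPr e_ps; case: e_ps W => ps1 ps2.
by rewrite even_walk_cat => /and3P[].
Qed.

Lemma even_walk_sub E R ps u v :
  subrel E R -> even_walk E ps u v -> even_walk R ps u v.
Proof.
move=> ER; elim: ps u => [|e ps IH] u /=; first exact: ER.
by case/and3P=> /ER-> /ER-> /IH.
Qed.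

Lemma even_walk_restrict E Q ps u v : Q u -> Q v ->
  {in ps, forall e, Q e.1 && Q e.2} -> even_walk E ps u v ->
  even_walk [rel a b | [&& E a b, Q a & Q b]] ps u v.
Proof.
move=> + Qv; elim: ps u => [|e ps IH] u Qu Q_ps /=.
  by move=> ->; rewrite Qu Qv.
case/and3P=> ue ee ev; have /andP[Q1 Q2] := Q_ps e (mem_head _ _).
rewrite ue ee Qu Q1 Q2 IH // => e' e'_ps.
by apply: Q_ps; rewrite inE e'_ps orbT.
Qed.

Fixpoint walk_seq ps v : seq T :=
  if ps is e :: ps' then e.1 :: e.2 :: walk_seq ps' v else [:: v].

Lemma even_walk_path E ps u v : even_walk E ps u v = path E u (walk_seq ps v).
Proof. by elim: ps u => [|e ps IH] u /=; rewrite ?andbT ?IH. Qed.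

Lemma size_walk_seq ps v : size (walk_seq ps v) = (2 * size ps).+1.
Proof. by elim: ps => // e ps IH; rewrite mulnS add2n /= IH. Qed.

Lemma nth_walk_seq_last x0 ps v : nth x0 (walk_seq ps v) (2 * size ps) = v.
Proof. by elim: ps => // e ps IH; rewrite mulnS add2n. Qed.

Lemma nth_walk_seq x0 ps v l : (l < size ps)%N ->
  (nth x0 (walk_seq ps v) (2 * l), nth x0 (walk_seq ps v) (2 * l).+1) =
  nth (x0, x0) ps l.
Proof.
elim: ps l => [|e ps IH] [|l] //; first by case: e.
by rewrite mulnS add2n; apply: IH.
Qed.

Lemma even_connectedP E es u v :
  even_connected E es u v <->
  exists ps, [/\ ps != [::], even_walk E ps u v & edge_submset ps es].
Proof.
split.
- case=> p [k [k_gt0 _ p0 pk [adj _ sub]]].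
  set pair := fun l => (nth u p (2 * l + 1), nth u p (2 * l + 2)).
  exists [seq pair l | l <- iota 0 k]; split=> //.
    by rewrite -size_eq0 size_map size_iota -lt0n.
  suff walk_from n : (n <= k)%N ->
      even_walk E [seq pair l | l <- iota (k - n) n] (nth u p (2 * (k - n))) v.
    by have := walk_from k (leqnn k); rewrite subnn p0.
  elim: n => [|n IH] n_le /=.
    by rewrite subn0 -pk addn1; apply: adj; lia.
  have -> : (k - n.+1).+1 = (k - n)%N by lia.
  have -> : (2 * (k - n.+1) + 2 = 2 * (k - n))%N by lia.
  rewrite IH ?(ltnW n_le) // andbT addn1 adj; last by lia.
  have -> : (2 * (k - n) = (2 * (k - n.+1)).+2)%N by lia.
  by apply: adj; lia.
- case=> ps [ps_nil W sub]; set q := walk_seq ps v.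
  have pairE l : (l < size ps)%N ->
      (nth u (u :: q) (2 * l + 1), nth u (u :: q) (2 * l + 2)) = nth (u, u) ps l.
    have -> : (2 * l + 2 = (2 * l).+2)%N by lia.
    by rewrite addn1; apply: nth_walk_seq.
  have pairsE : [seq (nth u (u :: q) (2 * l + 1), nth u (u :: q) (2 * l + 2))
                | l <- iota 0 (size ps)] = ps.
    rewrite -[RHS](mkseq_nth (u, u)); apply/eq_in_map => l.
    by rewrite mem_iota => /andP[_]; apply: pairE.
  exists (u :: q), (size ps); split=> //.
  + by rewrite lt0n size_eq0.
  + by rewrite /= size_walk_seq; lia.
  + by rewrite addn1 /= nth_walk_seq_last.
  split=> [r r_lt|l l_lt|f]; last by rewrite pairsE.
    move: W; rewrite even_walk_path => /(pathP u) /(_ r); apply.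
    by rewrite size_walk_seq; lia.
  by rewrite pairE // (edge_submset_has sub) // mem_nth.
Qed.

Lemma even_walk_link E es ps u v : even_walk E ps u v -> edge_submset ps es ->
  E u v \/ even_connected E es u v.
Proof.
case: ps => [|e ps] W sub; first by left.
by right; apply/even_connectedP; exists (e :: ps).
Qed.

Lemma even_connected_sym E es u v : symmetric E ->
  even_connected E es u v -> even_connected E es v u.
Proof.
move=> sE /even_connectedP[ps [ps_nil W sub]]; apply/even_connectedP.
exists (rev (map flip_edge ps)); split.
- by rewrite -size_eq0 size_rev size_map size_eq0.
- exact: even_walk_rev.
- exact: edge_submset_rev_flip.
Qed.

Definition far_from E es y u :=
  [/\ u <> y, ~ E y u & ~ even_connected E es y u].

Lemma far_from_cnbhd E es y u : far_from E es y u -> ~~ cnbhd E y u.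
Proof. by case=> uy Eyu _; apply/norP; split; [apply/eqP | apply/negP]. Qed.

Lemma even_walk_avoid E es ps y u v : symmetric E ->
  even_walk E ps u v -> edge_submset ps es ->
  far_from E es y u -> far_from E es y v ->
  {in ps, forall e, ~~ cnbhd E y e.1 && ~~ cnbhd E y e.2}.
Proof.
move=> sE W sub [uy Eyu Cyu] [vy Eyv Cyv] e /splitPr e_ps.
case: e_ps W sub => ps1 ps2; rewrite even_walk_cat => /and3P[W1 Ee W2] sub.
have not_to_u ps' : even_walk E ps' u y -> edge_submset ps' es -> False.
  by move=> W' /(even_walk_link W')[|/(even_connected_sym sE)]; rewrite 1?sE.
have not_to_v ps' : even_walk E ps' y v -> edge_submset ps' es -> False.
  by move=> W' /(even_walk_link W')[].
apply/andP; split; apply/negP; case/orP=> [/eqP ey | Ey].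
- by apply: (not_to_u ps1 _ (edge_submset_catl sub)); rewrite -ey.
- by apply: (not_to_v (e :: ps2) _ (edge_submset_catr sub)); rewrite /= Ey Ee.
- apply: (not_to_v ps2); first by rewrite -ey.
  by apply: (edge_submset_catr (ps1 := ps1 ++ [:: e])); rewrite -catA.
- apply: (not_to_u (ps1 ++ [:: e])); first by rewrite even_walk_cat W1 Ee /= sE.
  by apply: (edge_submset_catl (ps2 := ps2)); rewrite -catA.
Qed.

Lemma del_cnbhd_sym E y : symmetric E -> symmetric (del_cnbhd E y).
Proof. by move=> sE a b; rewrite /del_cnbhd sE (andbC (~~ cnbhd E y a)). Qed.

Lemma del_cnbhd_sub E y : subrel (del_cnbhd E y) E.
Proof. by move=> a b /andP[]. Qed.

Lemma even_connected_del_cnbhd E es y u v : symmetric E ->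
  far_from E es y u -> far_from E es y v -> even_connected E es u v ->
  even_connected (del_cnbhd E y) [seq e <- es | del_cnbhd E y e.1 e.2] u v.
Proof.
move=> sE fu fv /even_connectedP[ps [ps_nil W sub]].
have avoid := even_walk_avoid sE W sub fu fv.
have W' : even_walk (del_cnbhd E y) ps u v.
  exact: (even_walk_restrict (Q := predC (cnbhd E y))
            (far_from_cnbhd fu) (far_from_cnbhd fv) avoid W).
apply/even_connectedP; exists ps; split=> //.
apply: edge_submset_filter (del_cnbhd_sym y sE) sub _ => e.
exact: even_walk_edge W'.
Qed.

Lemma even_connected_mono E R es (P : pred (T * T)) u v : subrel R E ->
  even_connected R [seq e <- es | P e] u v -> even_connected E es u v.
Proof.
move=> RE /even_connectedP[ps [ps_nil W sub]]; apply/even_connectedP.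
exists ps; split=> //; first exact: even_walk_sub W.
move=> f; apply: leq_trans (sub f) _.
by rewrite count_filter; apply: sub_count => e /andP[].
Qed.

End EvenWalks.

Section AssocGraph.
Variables (T : finType) (E : rel T) (es : seq (T * T)) (y : T).

Let outside (a : T + T) := a <> inl y /\ ~ assoc_graph E es (inl y) a.
Let H := del_cnbhd E y.
Let es' := [seq e <- es | H e.1 e.2].

Lemma far_from_outside u : outside (inl u) -> far_from E es y u.
Proof.
case=> uy N; have yu : y <> u by move=> e; apply: uy; rewrite e.
split=> [e|Eyu|Cyu]; first by apply: uy; rewrite e.
  by apply: N; split=> //; left.
by apply: N; split=> //; right.
Qed.

Lemma assoc_graph_del_cnbhd a b : symmetric E -> outside a -> outside b ->
  assoc_graph E es a b -> assoc_graph H es' a b.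
Proof.
move=> sE; case: a b => [u|u] [v|v] //= out_a out_b.
- have [fu fv] := (far_from_outside out_a, far_from_outside out_b).
  case=> uv [Euv|Cuv]; split=> //; [left | right].
    by rewrite /H /del_cnbhd Euv (far_from_cnbhd fu) (far_from_cnbhd fv).
  exact: even_connected_del_cnbhd.
- have fu := far_from_outside out_a.
  by case=> <- Cuu; split=> //; apply: even_connected_del_cnbhd.
- have fv := far_from_outside out_b.
  by case=> -> Cvv; split=> //; apply: even_connected_del_cnbhd.
Qed.

Lemma assoc_graph_of_del_cnbhd a b :
  assoc_graph H es' a b -> assoc_graph E es a b.
Proof.
have mono u v :=
  @even_connected_mono _ E H es (fun e => H e.1 e.2) u v (@del_cnbhd_sub _ E y).
case: a b => [u|u] [v|v] //=.
- by case=> uv [/del_cnbhd_sub | /mono]; split=> //; [left | right].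
- by case=> <- /mono.
- by case=> -> /mono.
Qed.

End AssocGraph.

Theorem lemma4p5 (T : finType) (G : rel T) (h : nat) (xs ys : 'I_h -> T)
    (s : nat) (es : seq (T * T)) (y : T) :
  simple_graph G ->
  very_well_covered G ->
  (forall u : T, exists i : 'I_h, u = xs i \/ u = ys i) ->
  injective xs -> injective ys -> (forall i j, xs i <> ys j) ->
  min_vertex_cover G [set xs i | i : 'I_h] ->
  max_independent G [set ys i | i : 'I_h] ->
  (forall i, G (xs i) (ys i)) ->
  (1 <= s)%N -> size es = s -> all (fun e => G e.1 e.2) es ->
  induced_sub
    (del_cnbhdP (assoc_graph G es) (inl y))
    (assoc_graph (del_cnbhd G y)
       [seq e <- es | del_cnbhd G y e.1 e.2]).
Proof.
move=> [sG _] _ _ _ _ _ _ _ _ _ _ _; split.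
  by move=> a b [Gab [out_a out_b]]; apply: assoc_graph_del_cnbhd.
move=> a b [_ [_ [out_a _]]] [_ [_ [out_b _]]] /assoc_graph_of_del_cnbhd Gab.
by split.
Qed.
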